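(* Let $n\ge r\ge1$ be integers. For each $c>0$ define \[ \mathcal{L}_c:=\{X\in\mathbb{R}^{n\times r}:\ X_r\ge 0,\ \|X-I_{n\times r}\|_F\le c\,\|X_r-I_r\|_F\}. \] Then for each $c>0$ there exists $\delta>0$ such that for all $X\in\mathcal{L}_c$ with $\|X-I_{n\times r}\|_F\le\delta$, \[ \|X_r-I_r\|_F\le 2.1\sqrt{r}\,\|\sigma(X)-e\|. \]
   Context: For $X\in\mathbb{R}^{n\times r}$, $X_r$ denotes the $r\times r$ submatrix formed by the first $r$ rows of $X$, and $\sigma(X)\in\mathbb{R}^r$ is the vector of singular values of $X$ arranged in nonincreasing order. $I_{n\times r}$ is the $n\times r$ rectangular identity matrix (first $r$ rows form $I_r$, remaining rows zero), $e\in\mathbb{R}^r$ is the all-ones vector, $\|\cdot\|$ is the Euclidean norm, $\|\cdot\|_F$ the Frobenius norm, and $X_r\ge0$ means entrywise nonnegativity. *)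

From HB Require Import structures.
From mathcomp Require Import all_boot all_order all_algebra.
From mathcomp Require Import reals.
Set Implicit Arguments. Unset Strict Implicit. Unset Printing Implicit Defensive.
Import Order.TTheory GRing.Theory Num.Theory.
Local Open Scope ring_scope.

Definition frob (R : realType) m n (A : 'M[R]_(m, n)) : R :=
  Num.sqrt (\sum_(i < m) \sum_(j < n) A i j ^+ 2).

Definition vnorm (R : realType) n (v : 'rV[R]_n) : R :=
  Num.sqrt (\sum_(j < n) v 0 j ^+ 2).

Definition topr (R : realType) n r (H : (r <= n)%N) (X : 'M[R]_(n, r)) : 'M[R]_r :=
  \matrix_(i < r, j < r) X (widen_ord H i) j.

(* s is the vector sigma(X) of singular values of X (n x r, r <= n), in
   nonincreasing order: s is nonnegative, nonincreasing, and the squares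
   s_i^2 are the eigenvalues of X^T X counted with multiplicity. *)
Definition is_svals (R : realType) n r (X : 'M[R]_(n, r)) (s : 'rV[R]_r) : Prop :=
  [/\ forall i, 0 <= s 0 i,
      forall i j : 'I_r, (i <= j)%N -> s 0 j <= s 0 i &
      char_poly (X^T *m X) = \prod_(i < r) ('X - (s 0 i ^+ 2)%:P)].

Definition Lc (R : realType) n r (H : (r <= n)%N) (c : R) (X : 'M[R]_(n, r)) : Prop :=
  (forall i j, 0 <= topr H X i j) /\
  frob (X - pid_mx r) <= c * frob (topr H X - 1%:M).

(* Write X = I_{n x r} + E, so that A = X_r - I_r is the top block of E and
   X^T X - I = A + A^T + E^T E.  The eigenvalues of X^T X - I are s_i^2 - 1,
   hence |X^T X - I|_F^2 = sum_i (s_i^2 - 1)^2 <= 2 (max_i s_i^2 + 1) |s - e|^2,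
   and s_i^2 <= tr (X^T X) <= (1 + |E|_F)^2 r.  Nonnegativity of the
   off-diagonal entries of A gives 2 |A|_F^2 <= |A + A^T|_F^2, whence
   |A|_F^2 <= |X^T X - I|_F^2 + |E^T E|_F^2; on L_c the last term is at most
   (c |E|_F)^2 |A|_F^2, negligible for small E. *)

From HB Require Import structures.
From mathcomp Require Import all_boot all_order all_algebra.
From mathcomp Require Import reals.
From mathcomp Require Import ring lra.
Set Implicit Arguments. Unset Strict Implicit. Unset Printing Implicit Defensive.
Import Order.TTheory GRing.Theory Num.Theory.
Local Open Scope ring_scope.

Section CharPolyRoots.
Variable R : idomainType.

Lemma mxtrace_char_poly_prod n (N : 'M[R]_n) (a : 'I_n -> R) :
  char_poly N = \prod_i ('X - (a i)%:P) -> \tr N = \sum_i a i.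
Proof.
case: n N a => [|n] N a chiN; first by rewrite /mxtrace !big_ord0.
apply: oppr_inj; rewrite -char_poly_trace // chiN -(big_map a predT (fun x => 'X - x%:P)).
have := @coefPn_prod_XsubC _ [seq a i | i <- index_enum 'I_n.+1].
rewrite size_map !big_map.
have -> : size (index_enum 'I_n.+1) = n.+1.
  by rewrite [index_enum _]unlock -enumT size_enum_ord.
exact.
Qed.

Lemma det_Xadd_char_poly_prod n (N : 'M[R]_n) (a : 'I_n -> R) :
  char_poly N = \prod_i ('X - (a i)%:P) ->
  \det ('X%:M + map_mx polyC N) = \prod_i ('X + (a i)%:P).
Proof.
move=> chiN; have := det_map_mx (comp_poly (- 'X)) (char_poly_mx N).
have -> : map_mx (comp_poly (- 'X)) (char_poly_mx N) = - ('X%:M + map_mx polyC N).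
  apply/matrixP => i j; rewrite !mxE comp_polyB comp_polyC.
  by case: (i == j); rewrite /= ?mulr1n ?mulr0n ?comp_polyX ?comp_poly0 opprD ?oppr0 ?sub0r.
rewrite -scaleN1r detZ -/(char_poly N) chiN rmorph_prod /=.
under eq_bigr => i _ do rewrite comp_polyB comp_polyX comp_polyC -opprD.
by rewrite prodrN card_ord => /(can_inj (signrMK n)).
Qed.

Lemma char_poly_mulmx_sqr n (N : 'M[R]_n) (a : 'I_n -> R) :
  char_poly N = \prod_i ('X - (a i)%:P) ->
  char_poly (N *m N) = \prod_i ('X - (a i ^+ 2)%:P).
Proof.
move=> chiN.
have factor : char_poly_mx N *m ('X%:M + map_mx polyC N) =
    map_mx (comp_poly ('X ^+ 2)) (char_poly_mx (N *m N)).
  rewrite /char_poly_mx mulmxBl !mulmxDr -map_mxM -!scalar_mxM mul_mx_scalar mul_scalar_mx.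
  rewrite opprD addrA addrK -expr2; apply/matrixP => i j; rewrite !mxE.
  rewrite comp_polyB comp_polyC.
  by case: (i == j); rewrite /= ?mulr1n ?mulr0n ?comp_polyX ?comp_poly0.
apply/eqP; rewrite -subr_eq0 -(comp_poly_eq0 _ (q := 'X ^+ 2)) ?size_polyXn //.
rewrite comp_polyB subr_eq0 /char_poly -det_map_mx -factor det_mulmx.
rewrite -/(char_poly N) (det_Xadd_char_poly_prod chiN) chiN -big_split rmorph_prod /=.
apply/eqP/eq_bigr => i _; rewrite comp_polyB comp_polyX comp_polyC polyCM.
by rewrite -subr_sqr.
Qed.

End CharPolyRoots.

Section SumsOfSquares.
Variable R : realDomainType.

Lemma sum_mul_sqr_le (I : finType) (a b : I -> R) :
  (\sum_i a i * b i) ^+ 2 <= (\sum_i a i ^+ 2) * (\sum_i b i ^+ 2).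
Proof.
set S := \sum_i \sum_j a i ^+ 2 * b j ^+ 2.
set T := \sum_i \sum_j a i * b i * (a j * b j).
have lagrange : \sum_i \sum_j (a i * b j - a j * b i) ^+ 2 = S + S - 2 * T.
  have S_swap : S = \sum_i \sum_j a j ^+ 2 * b i ^+ 2 by rewrite exchange_big.
  rewrite {2}S_swap /S mulr_sumr -big_split -sumrB; apply: eq_bigr => i _.
  by rewrite mulr_sumr -big_split -sumrB; apply: eq_bigr => j _ /=; ring.
have : 0 <= \sum_i \sum_j (a i * b j - a j * b i) ^+ 2.
  by apply: sumr_ge0 => i _; apply: sumr_ge0 => j _; apply: sqr_ge0.
by rewrite expr2 !big_distrlr /= -/S -/T lagrange; lra.
Qed.

Lemma ler_sum_term (I : finType) (F : I -> R) j :
  (forall i, 0 <= F i) -> F j <= \sum_i F i.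
Proof. by move=> F_ge0; rewrite (bigD1 j) //= lerDl sumr_ge0. Qed.

Definition frob2 m n (A : 'M[R]_(m, n)) : R := \sum_i \sum_j A i j ^+ 2.

Lemma frob2_ge0 m n (A : 'M[R]_(m, n)) : 0 <= frob2 A.
Proof. by apply: sumr_ge0 => i _; apply: sumr_ge0 => j _; apply: sqr_ge0. Qed.

Lemma frob2_tr m n (A : 'M[R]_(m, n)) : frob2 A^T = frob2 A.
Proof.
by rewrite /frob2 exchange_big; apply: eq_bigr => i _; apply: eq_bigr => j _; rewrite mxE.
Qed.

Lemma mxtrace_mulTmx m n (A : 'M[R]_(m, n)) : \tr (A^T *m A) = frob2 A.
Proof.
rewrite /mxtrace /frob2 exchange_big; apply: eq_bigr => j _; rewrite !mxE.
by apply: eq_bigr => i _; rewrite !mxE expr2.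
Qed.

Lemma mxtrace_sqr_le n (A : 'M[R]_n) : \tr A ^+ 2 <= n%:R * frob2 A.
Proof.
have diag_le : \sum_i A i i ^+ 2 <= frob2 A.
  apply: ler_sum => i _.
  by apply: (ler_sum_term (F := fun j => A i j ^+ 2)) => j; apply: sqr_ge0.
have := sum_mul_sqr_le (fun i => A i i) (fun=> 1).
rewrite /mxtrace (eq_bigr _ (fun i _ => mulr1 _)) sumr_const card_ord expr1n => trA.
by apply: le_trans trA _; rewrite mulrC ler_wpM2l.
Qed.

Lemma frob2B_le m n (A B : 'M[R]_(m, n)) : frob2 (A - B) <= 2 * frob2 A + 2 * frob2 B.
Proof.
rewrite /frob2 !mulr_sumr -big_split /=; apply: ler_sum => i _.
rewrite !mulr_sumr -big_split /=; apply: ler_sum => j _; rewrite !mxE.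
have := sqr_ge0 (A i j + B i j); nra.
Qed.

Lemma frob2_addtr_ge n (A : 'M[R]_n) : (forall i j, i != j -> 0 <= A i j) ->
  2 * frob2 A <= frob2 (A + A^T).
Proof.
move=> offdiag_ge0.
have -> : frob2 (A + A^T) = frob2 A + frob2 A^T + 2 * \sum_i \sum_j A i j * A j i.
  rewrite /frob2 mulr_sumr -!big_split; apply: eq_bigr => i _.
  by rewrite mulr_sumr -!big_split; apply: eq_bigr => j _ /=; rewrite !mxE; ring.
suff : 0 <= \sum_i \sum_j A i j * A j i by rewrite frob2_tr; lra.
apply: sumr_ge0 => i _; apply: sumr_ge0 => j _.
have [<-|ij] := eqVneq i j; first exact: sqr_ge0.
by rewrite mulr_ge0 // offdiag_ge0 // eq_sym.
Qed.

Lemma frob2_mulTmx_le m n (A : 'M[R]_(m, n)) : frob2 (A^T *m A) <= frob2 A ^+ 2.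
Proof.
have -> : frob2 A = \sum_j \sum_i A i j ^+ 2 by rewrite /frob2 exchange_big.
rewrite expr2 big_distrlr /=; apply: ler_sum => j _; apply: ler_sum => k _.
rewrite mxE (eq_bigr (fun i => A i j * A i k)) ?sum_mul_sqr_le // => i _.
by rewrite mxE.
Qed.

Lemma frob2_le_addtr_add n (A Q : 'M[R]_n) : (forall i j, i != j -> 0 <= A i j) ->
  frob2 A <= frob2 (A + A^T + Q) + frob2 Q.
Proof.
move=> offdiag_ge0; have := frob2_addtr_ge offdiag_ge0.
have := frob2B_le (A + A^T + Q) Q; rewrite addrK; lra.
Qed.

End SumsOfSquares.

Section FrobeniusNorm.
Variable R : realType.

Lemma sqrtr_le_mul (a k x y : R) : 0 <= k -> 0 <= x -> 0 <= y ->
  a <= k ^+ 2 * (x * y) -> Num.sqrt a <= k * Num.sqrt x * Num.sqrt y.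
Proof.
move=> k_ge0 x_ge0 y_ge0 a_le; rewrite -{1}(ger0_norm k_ge0) -sqrtr_sqr.
by rewrite -!sqrtrM ?mulr_ge0 ?sqr_ge0 // -mulrA ler_wsqrtr.
Qed.

Lemma frobE m n (A : 'M[R]_(m, n)) : frob A = Num.sqrt (frob2 A).
Proof. by []. Qed.

Lemma frob2_le_sqr m n (A : 'M[R]_(m, n)) d : frob A <= d -> frob2 A <= d ^+ 2.
Proof.
rewrite frobE => Ad; rewrite -(sqr_sqrtr (frob2_ge0 A)).
by have := sqrtr_ge0 (frob2 A); nra.
Qed.

Lemma vnorm_subr_const n (v : 'rV[R]_n) a :
  vnorm (v - const_mx a) = Num.sqrt (\sum_j (v 0 j - a) ^+ 2).
Proof. by congr Num.sqrt; apply: eq_bigr => j _; rewrite !mxE. Qed.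

End FrobeniusNorm.

Section TopBlock.
Variables (R : realType) (n r : nat) (H : (r <= n)%N).

Lemma toprB (X Y : 'M[R]_(n, r)) : topr H (X - Y) = topr H X - topr H Y.
Proof. by apply/matrixP => i j; rewrite !mxE. Qed.

Lemma topr_pid : topr H (pid_mx r : 'M[R]_(n, r)) = 1%:M.
Proof. by apply/matrixP => i j; rewrite !mxE /= ltn_ord andbT. Qed.

Lemma mul_tr_pid_mx (E : 'M[R]_(n, r)) : (pid_mx r)^T *m E = topr H E.
Proof.
apply/matrixP => i j; rewrite !mxE (bigD1 (widen_ord H i)) //= big1 => [|k ki].
  by rewrite !mxE /= eqxx ltn_ord mul1r addr0.
rewrite !mxE /=; case: eqP => [ik|]; last by rewrite mul0r.
by case/eqP: ki; apply: val_inj.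
Qed.

Lemma gram_pid_add (E : 'M[R]_(n, r)) :
  (pid_mx r + E)^T *m (pid_mx r + E) =
  1%:M + topr H E + (topr H E)^T + E^T *m E.
Proof.
rewrite (raddfD trmx) mulmxDl !mulmxDr !mul_tr_pid_mx topr_pid.
by rewrite -(trmxK (pid_mx r)) -trmx_mul mul_tr_pid_mx !addrA.
Qed.

Lemma frob2_topr_le (E : 'M[R]_(n, r)) : frob2 (topr H E) <= frob2 E.
Proof.
rewrite /frob2 (bigID (fun i : 'I_n => (i < r)%N)) /= big_ord_narrow /=.
rewrite -[leLHS]addr0 lerD ?sumr_ge0 // => [|i _]; last first.
  by apply: sumr_ge0 => j _; apply: sqr_ge0.
by apply: ler_sum => i _; apply: ler_sum => j _; rewrite mxE.
Qed.

Lemma gram_sub1 (X : 'M[R]_(n, r)) :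
  X^T *m X - 1%:M = (topr H X - 1%:M) + (topr H X - 1%:M)^T +
                    (X - pid_mx r)^T *m (X - pid_mx r).
Proof.
have -> : topr H X - 1%:M = topr H (X - pid_mx r) by rewrite toprB topr_pid.
rewrite -[X in X^T *m X](subrKC (pid_mx r)) gram_pid_add.
by rewrite addrC !addrA addNr add0r.
Qed.

Lemma frob2_topr_sub1_le (X : 'M[R]_(n, r)) : (forall i j, 0 <= topr H X i j) ->
  frob2 (topr H X - 1%:M) <=
  frob2 (X^T *m X - 1%:M) + frob2 ((X - pid_mx r)^T *m (X - pid_mx r)).
Proof.
move=> X_ge0; rewrite gram_sub1; apply: frob2_le_addtr_add => i j ij.
by rewrite !mxE (negbTE ij) subr0; have := X_ge0 i j; rewrite mxE.
Qed.

End TopBlock.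

Section SingularValues.
Variables (R : realType) (n r : nat) (H : (r <= n)%N).
Variables (X : 'M[R]_(n, r)) (s : 'rV[R]_r).
Hypothesis svals : is_svals X s.

Lemma svals_mxtrace : \tr (X^T *m X) = \sum_i s 0 i ^+ 2.
Proof. by case: svals => _ _; apply: mxtrace_char_poly_prod. Qed.

Lemma svals_frob2_gram_sub1 :
  frob2 (X^T *m X - 1%:M) = \sum_i (s 0 i ^+ 2 - 1) ^+ 2.
Proof.
set M := X^T *m X.
have M_sym : M^T = M by rewrite trmx_mul trmxK.
have trMM : \tr (M *m M) = \sum_i (s 0 i ^+ 2) ^+ 2.
  by case: svals => _ _ /char_poly_mulmx_sqr; apply: mxtrace_char_poly_prod.
have N_sym : (M - 1%:M)^T = M - 1%:M by rewrite linearB /= M_sym trmx1.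
rewrite -mxtrace_mulTmx N_sym mulmxBl !mulmxBr mul1mx !mulmx1.
rewrite !raddfB /= mxtrace1 trMM svals_mxtrace.
have -> : \sum_i (s 0 i ^+ 2 - 1) ^+ 2 =
    \sum_i (s 0 i ^+ 2) ^+ 2 - 2 * \sum_i s 0 i ^+ 2 + \sum_(i < r) 1.
  by rewrite mulr_sumr -sumrB -big_split; apply: eq_bigr => i _ /=; ring.
rewrite sumr_const card_ord; ring.
Qed.

Lemma svals_sqr_le d : 0 <= d -> frob2 (X - pid_mx r) <= d ^+ 2 ->
  forall i, s 0 i ^+ 2 <= (1 + d) ^+ 2 * r%:R.
Proof.
move=> d_ge0 Ed i; set E := X - pid_mx r.
have r_ge1 : 1 <= r%:R :> R by rewrite ler1n (leq_ltn_trans (leq0n i)).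
have trM : \tr (X^T *m X) = r%:R + 2 * \tr (topr H E) + frob2 E.
  rewrite -[X in X^T *m X](subrKC (pid_mx r)) -/E gram_pid_add.
  by rewrite !mxtraceD mxtrace_tr mxtrace1 mxtrace_mulTmx; ring.
have trA : \tr (topr H E) ^+ 2 <= r%:R * d ^+ 2.
  apply: le_trans (mxtrace_sqr_le _) _; rewrite ler_wpM2l //.
  exact: le_trans (frob2_topr_le H E) Ed.
have trA_le : \tr (topr H E) <= r%:R * d.
  apply: ler_normlW; rewrite -ler_sqr ?nnegrE ?mulr_ge0 // real_normK ?num_real //.
  apply: le_trans trA _; rewrite exprMn; apply: (ler_wpM2r (sqr_ge0 d)).
  by rewrite expr2 ler_peMl.
have sqr_le_trM : s 0 i ^+ 2 <= \tr (X^T *m X).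
  rewrite svals_mxtrace.
  by apply: (ler_sum_term (F := fun j => s 0 j ^+ 2)) => j; apply: sqr_ge0.
rewrite trM in sqr_le_trM; nra.
Qed.

Lemma frob2_gram_sub1_le rho : (forall i, s 0 i ^+ 2 <= rho) ->
  frob2 (X^T *m X - 1%:M) <= 2 * (rho + 1) * \sum_i (s 0 i - 1) ^+ 2.
Proof.
move=> s_le; rewrite svals_frob2_gram_sub1 mulr_sumr; apply: ler_sum => i _.
have -> : (s 0 i ^+ 2 - 1) ^+ 2 = (s 0 i + 1) ^+ 2 * (s 0 i - 1) ^+ 2 by ring.
rewrite ler_wpM2r ?sqr_ge0 //; have := s_le i; have := sqr_ge0 (s 0 i - 1); lra.
Qed.

End SingularValues.

Theorem lemma3p1 (R : realType) (n r : nat) (Hr : (1 <= r)%N) (Hrn : (r <= n)%N) :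
  forall c : R, 0 < c ->
  exists delta : R, 0 < delta /\
    forall (X : 'M[R]_(n, r)), Lc Hrn c X ->
      frob (X - pid_mx r) <= delta ->
      forall s : 'rV[R]_r, is_svals X s ->
        frob (topr Hrn X - 1%:M) <=
          (21%:R / 10%:R) * Num.sqrt (r%:R) * vnorm (s - const_mx 1).
Proof.
move=> c c_gt0; set delta := (20 * (1 + c))^-1.
(* delta <= 1/20 gives 2 ((1 + delta)^2 r + 1) <= 17/4 r, (c delta)^2 <= 1/400
   gives |E^T E|_F^2 <= |A|_F^2 / 400, and 17/4 * 400/399 < 2.1^2. *)
have delta_gt0 : 0 < delta by rewrite invr_gt0; lra.
have delta_c : 20 * (1 + c) * delta = 1 by rewrite mulfV //; lra.
have delta_le : delta <= 1 / 20 by nra.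
have cdelta_le : (c * delta) ^+ 2 <= 1 / 400.
  have := mulr_ge0 (ltW c_gt0) (ltW delta_gt0); nra.
exists delta; split=> // X [X_ge0 X_Lc] X_delta s svals.
set E := X - pid_mx r; set A := topr Hrn X - 1%:M; set Sv := \sum_i (s 0 i - 1) ^+ 2.
have Sv_ge0 : 0 <= Sv by apply: sumr_ge0 => i _; apply: sqr_ge0.
have E_delta : frob2 E <= delta ^+ 2 := frob2_le_sqr X_delta.
have E_A : frob2 E <= c ^+ 2 * frob2 A.
  by have := frob2_le_sqr X_Lc; rewrite exprMn frobE sqr_sqrtr ?frob2_ge0.
have Q_small : frob2 (E^T *m E) <= (c * delta) ^+ 2 * frob2 A.
  by apply: le_trans (frob2_mulTmx_le E) _; rewrite exprMn mulrAC expr2 ler_pM ?frob2_ge0.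
have N_small : frob2 (X^T *m X - 1%:M) <= 17 / 4 * r%:R * Sv.
  have s_le := svals_sqr_le Hrn svals (ltW delta_gt0) E_delta.
  apply: le_trans (frob2_gram_sub1_le svals s_le) _.
  apply: (ler_wpM2r Sv_ge0); have : 1 <= r%:R :> R by rewrite ler1n.
  have : (1 + delta) ^+ 2 <= 441 / 400 by nra.
  nra.
have := frob2_topr_sub1_le X_ge0; rewrite -/E -/A => A_le.
rewrite vnorm_subr_const -/Sv frobE; apply: sqrtr_le_mul; rewrite ?divr_ge0 ?ler0n //.
have := ler_wpM2r (frob2_ge0 A) cdelta_le; have := mulr_ge0 (ler0n R r) Sv_ge0; lra.
Qed.
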